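(* Let $T(t,\tau)$ be an evolution family on a Banach space $X$ and $\|\cdot\|_t$ a family of norms satisfying $\|x\|\le\|x\|_t\le Ct^\epsilon\|x\|$ ($x\in X$, $t\ge1$) for some $C>0$, $\epsilon\ge0$, and $\|T(t,s)x\|_t\le M(t/s)^a\|x\|_s$ for all $t\ge s\ge1$, $x\in X$, with some $M,a>0$. Let $B:[1,\infty)\to B(X)$ be strongly continuous with $\|B(t)\|\le c/t^{1+\epsilon}$ for $t\ge1$, and let $U(t,\tau)$ be the evolution family satisfying $U(t,\tau)=T(t,\tau)+\int_\tau^tT(t,s)B(s)U(s,\tau)\,ds$ for $t\ge\tau\ge1$. Then $$\|U(t,\tau)x\|_t\le M(t/\tau)^{a+cCM}\|x\|_\tau\quad\text{for all } t\ge\tau\ge1,\ x\in X.$$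
   Context: Let $X$ be a Banach space with norm $\|\cdot\|$, $B(X)$ the bounded linear operators on $X$. An evolution family is a family of bounded linear operators $T(t,\tau)$ on $X$, $t\ge\tau\ge1$, such that $T(t,t)=\mathrm{Id}$ for $t\ge1$, $T(t,s)T(s,\tau)=T(t,\tau)$ for $t\ge s\ge\tau\ge1$, and for each $\tau\ge1$ and $x\in X$ the map $s\mapsto T(s,\tau)x$ is continuous on $[\tau,\infty)$. A family of norms $\|\cdot\|_t$ is also assumed to have $t\mapsto\|x\|_t$ measurable for each $x$. *)

From Stdlib Require Import Reals Lra.
Open Scope R_scope.

Record BanachSpace : Type := {
  bcar :> Type;
  bzero : bcar;
  badd : bcar -> bcar -> bcar;
  bopp : bcar -> bcar;
  bscal : R -> bcar -> bcar;
  bnorm : bcar -> R;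
  badd_assoc : forall x y z, badd x (badd y z) = badd (badd x y) z;
  badd_comm : forall x y, badd x y = badd y x;
  badd_0 : forall x, badd x bzero = x;
  badd_opp : forall x, badd x (bopp x) = bzero;
  bscal_1 : forall x, bscal 1 x = x;
  bscal_assoc : forall r s x, bscal r (bscal s x) = bscal (r * s) x;
  bscal_distr_l : forall r x y, bscal r (badd x y) = badd (bscal r x) (bscal r y);
  bscal_distr_r : forall r s x, bscal (r + s) x = badd (bscal r x) (bscal s x);
  bnorm_nonneg : forall x, 0 <= bnorm x;
  bnorm_eq0 : forall x, bnorm x = 0 -> x = bzero;
  bnorm_scal : forall r x, bnorm (bscal r x) = Rabs r * bnorm x;
  bnorm_triangle : forall x y, bnorm (badd x y) <= bnorm x + bnorm y;
  bcomplete : forall u : nat -> bcar,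
    (forall eps, eps > 0 -> exists N, forall m n, (m >= N)%nat -> (n >= N)%nat ->
        bnorm (badd (u m) (bopp (u n))) < eps) ->
    exists l, forall eps, eps > 0 -> exists N, forall n, (n >= N)%nat ->
        bnorm (badd (u n) (bopp l)) < eps
}.

Arguments bzero {_}. Arguments badd {_} _ _. Arguments bopp {_} _.
Arguments bscal {_} _ _. Arguments bnorm {_} _.

Definition bsub {X : BanachSpace} (x y : X) : X := badd x (bopp y).

Definition bounded_linear {X : BanachSpace} (A : X -> X) : Prop :=
  (forall x y, A (badd x y) = badd (A x) (A y)) /\
  (forall r x, A (bscal r x) = bscal r (A x)) /\
  (exists K, forall x, bnorm (A x) <= K * bnorm x).

Definition is_norm {X : BanachSpace} (nu : X -> R) : Prop :=
  (forall x, 0 <= nu x) /\ (forall x, nu x = 0 -> x = bzero) /\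
  (forall r x, nu (bscal r x) = Rabs r * nu x) /\
  (forall x y, nu (badd x y) <= nu x + nu y).

Definition continuous_on_from {X : BanachSpace} (a : R) (f : R -> X) : Prop :=
  forall s, a <= s -> forall eps, eps > 0 -> exists delta, delta > 0 /\
    forall s', a <= s' -> Rabs (s' - s) < delta -> bnorm (bsub (f s') (f s)) < eps.

(** Evolution family T(t,tau), t >= tau >= 1 (values for other arguments irrelevant). *)
Definition evolution_family {X : BanachSpace} (T : R -> R -> X -> X) : Prop :=
  (forall t tau, t >= tau -> tau >= 1 -> bounded_linear (T t tau)) /\
  (forall t x, t >= 1 -> T t t x = x) /\
  (forall t s tau x, t >= s -> s >= tau -> tau >= 1 -> T t s (T s tau x) = T t tau x) /\
  (forall tau x, tau >= 1 -> continuous_on_from tau (fun s => T s tau x)).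

(** Vector-valued integral on [a,b]: the gauge (Henstock-Kurzweil) integral,
    defined by Riemann sums over delta-fine tagged partitions.  Every Bochner
    integrable function is gauge integrable with the same integral. *)
Fixpoint vsum {X : BanachSpace} (f : nat -> X) (n : nat) : X :=
  match n with O => bzero | S k => badd (vsum f k) (f k) end.

Definition tagged_partition (a b : R) (n : nat) (p xi : nat -> R) : Prop :=
  p O = a /\ p n = b /\ forall i, (i < n)%nat -> p i <= xi i <= p (S i).

Definition fine (delta : R -> R) (n : nat) (p xi : nat -> R) : Prop :=
  forall i, (i < n)%nat -> xi i - p i < delta (xi i) /\ p (S i) - xi i < delta (xi i).

Definition riemann_sum {X : BanachSpace} (f : R -> X) (n : nat) (p xi : nat -> R) : X :=
  vsum (fun i => bscal (p (S i) - p i) (f (xi i))) n.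

Definition is_integral {X : BanachSpace} (f : R -> X) (a b : R) (v : X) : Prop :=
  forall eps, eps > 0 -> exists delta : R -> R, (forall s, delta s > 0) /\
    forall n p xi, tagged_partition a b n p xi -> fine delta n p xi ->
      bnorm (bsub (riemann_sum f n p xi) v) < eps.

(** Write [g t = ||U(t,tau)x||_t t^-a] and [h s = ||U(s,tau)x|| s^-a].  Applying
    [||.||_t] to the variation-of-constants formula and using the growth bound of [T],
    the norm equivalence [||.|| <= ||.||_t <= C t^eps ||.||] and the decay
    [||B(s)|| <= c/s^(1+eps)] gives the integral inequality
        g t <= M tau^-a ||x||_tau + int_tau^t (c C M) h(s)/s ds,   with h <= g.
    A Gronwall lemma for the kernel [L/s] then yields [g t <= M tau^-a ||x||_tau (t/tau)^L],
    i.e. the claimed bound with exponent [a + c C M]. *)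

From Stdlib Require Import Reals Lra Lia Classical IndefiniteDescription.
Open Scope R_scope.

Section NormFacts.
Variable X : BanachSpace.

Lemma bscal_0 (x : X) : bscal 0 x = bzero.
Proof. apply bnorm_eq0. rewrite bnorm_scal, Rabs_R0. ring. Qed.

Lemma bopp_scal (y : X) : bopp y = bscal (-1) y.
Proof.
  rewrite <- (badd_0 _ (bscal (-1) y)), <- (badd_opp _ y), badd_assoc.
  rewrite <- (bscal_1 _ y) at 3.
  rewrite <- bscal_distr_r.
  replace (-1 + 1) with 0 by ring.
  rewrite bscal_0, badd_comm, badd_0. reflexivity.
Qed.

Lemma badd_bsub (y z : X) : badd z (bsub y z) = y.
Proof.
  unfold bsub. rewrite badd_assoc, (badd_comm _ z y), <- badd_assoc, badd_opp, badd_0.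
  reflexivity.
Qed.

Lemma bsub_swap (y z : X) : bsub z y = bscal (-1) (bsub y z).
Proof.
  unfold bsub. rewrite bscal_distr_l, <- !bopp_scal, (bopp_scal (bopp z)), (bopp_scal z).
  rewrite bscal_assoc. replace (-1 * -1) with 1 by ring. rewrite bscal_1. apply badd_comm.
Qed.

Lemma bnorm_is_norm : is_norm (@bnorm X).
Proof.
  split; [exact (bnorm_nonneg X)|]. split; [exact (bnorm_eq0 X)|].
  split; [exact (bnorm_scal X)|exact (bnorm_triangle X)].
Qed.

Variable nu : X -> R.
Hypothesis nu_norm : is_norm nu.

Lemma norm_zero : nu bzero = 0.
Proof.
  destruct nu_norm as (_ & _ & Hscal & _).
  rewrite <- (bscal_0 bzero), Hscal, Rabs_R0. ring.
Qed.

Lemma norm_sub_sym (y z : X) : nu (bsub z y) = nu (bsub y z).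
Proof.
  destruct nu_norm as (_ & _ & Hscal & _).
  rewrite bsub_swap, Hscal, Rabs_left by lra. ring.
Qed.

Lemma norm_sub_triangle (y z : X) : nu y <= nu z + nu (bsub y z).
Proof.
  destruct nu_norm as (_ & _ & _ & Htri).
  rewrite <- (badd_bsub y z) at 1. apply Htri.
Qed.

Lemma norm_reverse_triangle (y z : X) : Rabs (nu y - nu z) <= nu (bsub y z).
Proof.
  pose proof (norm_sub_triangle y z). pose proof (norm_sub_triangle z y).
  pose proof (norm_sub_sym y z). apply Rabs_le. lra.
Qed.

End NormFacts.

Lemma negative_bound_trivial_space (X : BanachSpace) (A : X -> X) (k : R) :
  k < 0 -> (forall y, bnorm (A y) <= k * bnorm y) -> forall y : X, y = bzero.
Proof.
  intros Hk HA y. apply bnorm_eq0.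
  pose proof (HA y). pose proof (bnorm_nonneg _ (A y)). pose proof (bnorm_nonneg _ y). nra.
Qed.

Fixpoint rsum (f : nat -> R) (n : nat) : R :=
  match n with O => 0 | S k => rsum f k + f k end.

Definition real_riemann_sum (k : R -> R) (n : nat) (p xi : nat -> R) : R :=
  rsum (fun i => (p (S i) - p i) * k (xi i)) n.

Lemma rsum_le (f g : nat -> R) (n : nat) :
  (forall i, (i < n)%nat -> f i <= g i) -> rsum f n <= rsum g n.
Proof.
  induction n as [|n IH]; simpl; intros Hfg; [lra|].
  pose proof (Hfg n ltac:(lia)). assert (rsum f n <= rsum g n) by (apply IH; intros; apply Hfg; lia).
  lra.
Qed.

Lemma real_riemann_sum_scal (c : R) (k : R -> R) (n : nat) (p xi : nat -> R) :
  c * real_riemann_sum k n p xi = real_riemann_sum (fun s => c * k s) n p xi.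
Proof. unfold real_riemann_sum. induction n as [|n IH]; simpl; [ring|]. rewrite <- IH. ring. Qed.

Lemma tagged_partition_bounds (a b : R) (n : nat) (p xi : nat -> R) :
  tagged_partition a b n p xi -> forall i, (i <= n)%nat -> a <= p i <= b.
Proof.
  intros (Hp0 & Hpn & Htag).
  assert (Hmono : forall i j, (i <= j)%nat -> (j <= n)%nat -> p i <= p j).
  { intros i j Hij. induction Hij as [|j Hij IH]; intros Hj; [lra|].
    pose proof (IH ltac:(lia)). pose proof (Htag j ltac:(lia)). lra. }
  intros i Hi. rewrite <- Hp0, <- Hpn. split; apply Hmono; lia.
Qed.

Lemma real_riemann_sum_le (a b : R) (n : nat) (p xi : nat -> R) (k1 k2 : R -> R) :
  tagged_partition a b n p xi -> (forall s, a <= s <= b -> k1 s <= k2 s) ->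
  real_riemann_sum k1 n p xi <= real_riemann_sum k2 n p xi.
Proof.
  intros Hpart Hk. pose proof (tagged_partition_bounds _ _ _ _ _ Hpart) as Hb.
  destruct Hpart as (_ & _ & Htag). apply rsum_le. intros i Hi.
  pose proof (Htag i Hi). pose proof (Hb i ltac:(lia)). pose proof (Hb (S i) ltac:(lia)).
  apply Rmult_le_compat_l; [lra|]. apply Hk. lra.
Qed.

Lemma norm_riemann_sum_le (X : BanachSpace) (nu : X -> R) (f : R -> X)
    (a b : R) (n : nat) (p xi : nat -> R) :
  is_norm nu -> tagged_partition a b n p xi ->
  nu (riemann_sum f n p xi) <= real_riemann_sum (fun s => nu (f s)) n p xi.
Proof.
  intros Hnu (_ & _ & Htag). unfold riemann_sum, real_riemann_sum.
  induction n as [|n IH]; simpl.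
  - rewrite norm_zero by exact Hnu. lra.
  - destruct Hnu as (_ & _ & Hscal & Htri).
    pose proof (Htri (vsum (fun i => bscal (p (S i) - p i) (f (xi i))) n)
                     (bscal (p (S n) - p n) (f (xi n)))) as Hsplit.
    rewrite Hscal, Rabs_right in Hsplit by (pose proof (Htag n ltac:(lia)); lra).
    assert (IH' := IH (fun i Hi => Htag i ltac:(lia))). lra.
Qed.

Lemma fine_partition_extend (delta : R -> R) (a y s z : R) (n : nat) (p xi : nat -> R) :
  tagged_partition a y n p xi -> fine delta n p xi ->
  y <= s <= z -> s - y < delta s -> z - s < delta s ->
  exists n' p' xi', tagged_partition a z n' p' xi' /\ fine delta n' p' xi'.
Proof.
  intros (Hp0 & Hpn & Htag) Hfine Hs Hy Hz.
  exists (S n), (fun i => if Nat.leb i n then p i else z),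
    (fun i => if Nat.ltb i n then xi i else s).
  assert (Hcases : forall i, (i < S n)%nat -> (i < n)%nat \/ i = n) by (intros; lia).
  split; [split; [|split]|].
  - simpl. exact Hp0.
  - rewrite (proj2 (Nat.leb_gt (S n) n)) by lia. reflexivity.
  - intros i Hi. destruct (Hcases i Hi) as [Hlt| ->].
    + rewrite (proj2 (Nat.ltb_lt i n)), (proj2 (Nat.leb_le i n)), (proj2 (Nat.leb_le (S i) n))
        by lia. apply Htag. exact Hlt.
    + rewrite Nat.ltb_irrefl, Nat.leb_refl, (proj2 (Nat.leb_gt (S n) n)) by lia. lra.
  - intros i Hi. destruct (Hcases i Hi) as [Hlt| ->].
    + rewrite (proj2 (Nat.ltb_lt i n)), (proj2 (Nat.leb_le i n)), (proj2 (Nat.leb_le (S i) n))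
        by lia. apply Hfine. exact Hlt.
    + rewrite Nat.ltb_irrefl, Nat.leb_refl, (proj2 (Nat.leb_gt (S n) n)) by lia. lra.
Qed.

(** The supremum of the right endpoints reachable by fine partitions is reachable and
    equals [b], since fine partitions extend past any point. *)
Lemma cousin (a b : R) (delta : R -> R) :
  a <= b -> (forall s, delta s > 0) ->
  exists n p xi, tagged_partition a b n p xi /\ fine delta n p xi.
Proof.
  intros Hab Hd.
  set (E := fun y => a <= y <= b /\
    exists n p xi, tagged_partition a y n p xi /\ fine delta n p xi).
  assert (Ea : E a).
  { split; [lra|]. exists O, (fun _ => a), (fun _ => a).
    split; [split; [reflexivity|split; [reflexivity|intros; lia]]|intros i Hi; lia]. }
  assert (Eb : bound E) by (exists b; intros y [Hy _]; lra).
  destruct (completeness E Eb (ex_intro _ a Ea)) as [s [Hub Hlub]].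
  assert (Has : a <= s) by (apply Hub; exact Ea).
  assert (Hsb : s <= b) by (apply Hlub; intros y [Hy _]; lra).
  pose proof (Hd s) as Hds.
  assert (Hclose : exists y, E y /\ s - delta s < y).
  { apply NNPP. intros Hno. assert (s <= s - delta s); [|lra].
    apply Hlub. intros y Hy. apply Rnot_lt_le. intros Hlt. apply Hno. exists y. auto. }
  destruct Hclose as [y [[Hy [n [p [xi [Hpart Hfine]]]]] Hys]].
  assert (Hyle : y <= s) by (apply Hub; split; [exact Hy|eauto]).
  set (z := Rmin b (s + delta s / 2)).
  assert (Hz : s <= z /\ z - s < delta s).
  { unfold z. pose proof (Rmin_r b (s + delta s / 2)). split; [apply Rmin_glb|]; lra. }
  destruct (fine_partition_extend delta a y s z n p xi Hpart Hfine ltac:(lra) ltac:(lra)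
    ltac:(lra)) as [n' [p' [xi' Hz']]].
  assert (Hzs : z <= s) by (apply Hub; split; [split; [lra|apply Rmin_l]|eauto]).
  assert (Hzb : z = b).
  { unfold z in *. unfold Rmin in *. destruct (Rle_dec b (s + delta s / 2)); lra. }
  rewrite <- Hzb. eauto.
Qed.

(** Summing per-interval errors: the Riemann sum of [G'] telescopes against [G]. *)
Lemma telescoping_bound (G G' : R -> R) (e : R) (n : nat) (p xi : nat -> R) :
  (forall i, (i < n)%nat ->
     Rabs ((p (S i) - p i) * G' (xi i) - (G (p (S i)) - G (p i))) <= e * (p (S i) - p i)) ->
  Rabs (real_riemann_sum G' n p xi - (G (p n) - G (p O))) <= e * (p n - p O).
Proof.
  unfold real_riemann_sum. induction n as [|n IH]; intros Hloc; simpl.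
  - replace (0 - (G (p O) - G (p O))) with 0 by ring. rewrite Rabs_R0. lra.
  - pose proof (IH (fun i Hi => Hloc i ltac:(lia))) as Hprev. pose proof (Hloc n ltac:(lia)).
    replace (rsum (fun i => (p (S i) - p i) * G' (xi i)) n + (p (S n) - p n) * G' (xi n)
             - (G (p (S n)) - G (p O)))
      with ((rsum (fun i => (p (S i) - p i) * G' (xi i)) n - (G (p n) - G (p O)))
            + ((p (S n) - p n) * G' (xi n) - (G (p (S n)) - G (p n)))) by ring.
    eapply Rle_trans; [apply Rabs_triang|]. lra.
Qed.

Lemma derivative_local_bound (G : R -> R) (s l e : R) :
  derivable_pt_lim G s l -> e > 0 ->
  exists d, d > 0 /\ forall y, Rabs (y - s) < d ->
    Rabs (G y - G s - l * (y - s)) <= e * Rabs (y - s).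
Proof.
  intros HG He. destruct (HG e He) as [[d Hd] Hlim]. exists d. split; [lra|].
  intros y Hy. destruct (Req_dec y s) as [->|Hne].
  - replace (G s - G s - l * (s - s)) with 0 by ring. rewrite Rminus_diag, !Rabs_R0. lra.
  - assert (Hh : y - s <> 0) by lra.
    specialize (Hlim (y - s) Hh Hy). replace (s + (y - s)) with y in Hlim by ring.
    replace (G y - G s - l * (y - s)) with (((G y - G s) / (y - s) - l) * (y - s))
      by (field; exact Hh).
    rewrite Rabs_mult. apply Rmult_le_compat_r; [apply Rabs_pos|lra].
Qed.

Lemma straddle (G : R -> R) (s l e d q0 q1 : R) :
  (forall y, Rabs (y - s) < d -> Rabs (G y - G s - l * (y - s)) <= e * Rabs (y - s)) ->
  q0 <= s <= q1 -> s - q0 < d -> q1 - s < d ->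
  Rabs ((q1 - q0) * l - (G q1 - G q0)) <= e * (q1 - q0).
Proof.
  intros Hloc Hs H0 H1.
  assert (E0 := Hloc q0 ltac:(apply Rabs_def1; lra)).
  assert (E1 := Hloc q1 ltac:(apply Rabs_def1; lra)).
  rewrite (Rabs_left1 (q0 - s)) in E0 by lra. rewrite (Rabs_right (q1 - s)) in E1 by lra.
  replace ((q1 - q0) * l - (G q1 - G q0))
    with (- (G q1 - G s - l * (q1 - s)) + (G q0 - G s - l * (q0 - s))) by ring.
  eapply Rle_trans; [apply Rabs_triang|]. rewrite Rabs_Ropp. lra.
Qed.

Lemma gauge_fundamental_theorem (G G' : R -> R) (a b : R) :
  a <= b -> (forall s, a <= s <= b -> derivable_pt_lim G s (G' s)) ->
  forall eta, eta > 0 -> exists delta : R -> R, (forall s, delta s > 0) /\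
    forall n p xi, tagged_partition a b n p xi -> fine delta n p xi ->
      Rabs (real_riemann_sum G' n p xi - (G b - G a)) <= eta.
Proof.
  intros Hab HG eta Heta.
  set (e := eta / (b - a + 1)).
  assert (He : e > 0) by (apply Rdiv_lt_0_compat; lra).
  assert (Hgauge : forall s, exists d, d > 0 /\ (a <= s <= b -> forall y, Rabs (y - s) < d ->
              Rabs (G y - G s - G' s * (y - s)) <= e * Rabs (y - s))).
  { intros s. destruct (Rle_dec a s) as [Has|Has]; [destruct (Rle_dec s b) as [Hsb|Hsb]|].
    - destruct (derivative_local_bound G s (G' s) e (HG s (conj Has Hsb)) He) as [d Hd].
      exists d. split; [apply Hd|intros _; apply Hd].
    - exists 1. split; [lra|intros; lra].
    - exists 1. split; [lra|intros; lra]. }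
  destruct (functional_choice _ Hgauge) as [delta Hdelta].
  exists delta. split; [intros s; apply Hdelta|].
  intros n p xi Hpart Hfine.
  pose proof (tagged_partition_bounds _ _ _ _ _ Hpart) as Hb.
  destruct Hpart as (Hp0 & Hpn & Htag).
  assert (Htele := telescoping_bound G G' e n p xi).
  rewrite Hp0, Hpn in Htele.
  eapply Rle_trans; [apply Htele|].
  - intros i Hi. pose proof (Htag i Hi). pose proof (Hb i ltac:(lia)).
    pose proof (Hb (S i) ltac:(lia)). destruct (Hfine i Hi).
    apply straddle with (s := xi i) (d := delta (xi i)); try lra.
    apply Hdelta. lra.
  - unfold e. apply (Rmult_le_reg_r (b - a + 1)); [lra|].
    field_simplify; [|lra]. nra.
Qed.
Lemma continuity_pt_eps (f : R -> R) (s : R) : continuity_pt f s ->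
  forall e, e > 0 -> exists d, d > 0 /\ forall u, Rabs (u - s) < d -> Rabs (f u - f s) < e.
Proof.
  intros Hc e He. destruct (Hc e He) as [d [Hd Hclose]]. exists d. split; [exact Hd|].
  intros u Hu. destruct (Req_dec u s) as [->|Hne].
  - rewrite Rminus_diag, Rabs_R0. exact He.
  - apply Hclose. split; [split; [exact I|auto]|exact Hu].
Qed.

Lemma continuity_pt_of_eps (f : R -> R) (s : R) :
  (forall e, e > 0 -> exists d, d > 0 /\ forall u, Rabs (u - s) < d -> Rabs (f u - f s) < e) ->
  continuity_pt f s.
Proof.
  intros H e He. destruct (H e He) as [d [Hd Hclose]]. exists d. split; [exact Hd|].
  intros u [_ Hu]. apply Hclose. exact Hu.
Qed.

Lemma negative_near (f : R -> R) (s : R) : continuity_pt f s -> f s < 0 ->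
  exists d, d > 0 /\ forall u, Rabs (u - s) < d -> f u < 0.
Proof.
  intros Hc Hneg. destruct (continuity_pt_eps f s Hc (- f s) ltac:(lra)) as [d [Hd Hclose]].
  exists d. split; [exact Hd|]. intros u Hu. specialize (Hclose u Hu).
  apply Rabs_def2 in Hclose. lra.
Qed.

(** The supremum of the initial intervals where [phi < 0] can be neither short of [T]
    nor a point where the property fails. *)
Lemma continuous_induction (phi : R -> R) (tau T : R) :
  tau <= T -> phi tau <= 0 ->
  (forall s, tau <= s <= T -> continuity_pt phi s) ->
  (forall s, tau <= s <= T -> (forall u, tau <= u <= s -> phi u <= 0) -> phi s < 0) ->
  forall s, tau <= s <= T -> phi s < 0.
Proof.
  intros HT Hbase Hcont Hstep.
  set (E := fun s => tau <= s <= T /\ forall u, tau <= u <= s -> phi u < 0).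
  assert (Etau : E tau).
  { split; [lra|]. intros u Hu. replace u with tau by lra.
    apply Hstep; [lra|]. intros v Hv. replace v with tau by lra. exact Hbase. }
  destruct (completeness E (ex_intro _ T (fun y Ey => proj2 (proj1 Ey))) (ex_intro _ tau Etau))
    as [s0 [Hub Hlub]].
  assert (Hs0 : tau <= s0 <= T) by (split; [apply Hub, Etau|apply Hlub; intros y Ey; apply Ey]).
  assert (Hbelow : forall u, tau <= u < s0 -> phi u < 0).
  { intros u Hu. apply Rnot_le_lt. intros Hnn. assert (s0 <= u); [|lra].
    apply Hlub. intros y [Hy Hneg]. apply Rnot_lt_le. intros Hlt.
    specialize (Hneg u ltac:(lra)). lra. }
  assert (Hat : phi s0 < 0).
  { apply Hstep; [exact Hs0|]. intros u Hu.
    destruct (Rlt_le_dec u s0) as [Hlt|Hge]; [left; apply Hbelow; lra|].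
    replace u with s0 by lra. destruct (Req_dec s0 tau) as [->|Hne]; [exact Hbase|].
    apply Rnot_lt_le. intros Hpos.
    destruct (negative_near (fun v => - phi v) s0 (continuity_pt_opp _ _ (Hcont s0 Hs0))
                ltac:(lra)) as [d [Hd Hnear]].
    assert (Hleft := Hnear (Rmax tau (s0 - d / 2))).
    pose proof (Rmax_l tau (s0 - d / 2)). pose proof (Rmax_r tau (s0 - d / 2)).
    assert (Rmax tau (s0 - d / 2) < s0) by (apply Rmax_lub_lt; lra).
    pose proof (Hbelow (Rmax tau (s0 - d / 2)) ltac:(lra)).
    assert (- phi (Rmax tau (s0 - d / 2)) < 0) by (apply Hleft, Rabs_def1; lra). lra. }
  destruct (negative_near phi s0 (Hcont s0 Hs0) Hat) as [d [Hd Hnear]].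
  assert (Hend : s0 = T).
  { apply Rle_antisym; [apply Hs0|]. apply Rnot_lt_le. intros Hlt.
    set (s1 := Rmin T (s0 + d / 2)).
    assert (Hs1 : s0 < s1 <= s0 + d / 2) by (split; [apply Rmin_glb_lt|apply Rmin_r]; lra).
    assert (s1 <= s0); [|lra]. apply Hub. split; [split; [lra|apply Rmin_l]|].
    intros u Hu. destruct (Rlt_le_dec u s0); [apply Hbelow; lra|].
    apply Hnear, Rabs_def1; lra. }
  intros s Hs. destruct (Rlt_le_dec s s0); [apply Hbelow; lra|].
  replace s with s0 by lra. exact Hat.
Qed.

Lemma Rpower_pos (x y : R) : 0 < Rpower x y.
Proof. apply exp_pos. Qed.

Lemma Rpower_base_1 (y : R) : Rpower 1 y = 1.
Proof. unfold Rpower. rewrite ln_1, Rmult_0_r. apply exp_0. Qed.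

Lemma Rpower_div (x y z : R) : 0 < x -> 0 < y -> Rpower (x / y) z = Rpower x z / Rpower y z.
Proof.
  intros Hx Hy. unfold Rdiv. rewrite <- Rpower_mult_distr by (auto; apply Rinv_0_lt_compat; lra).
  unfold Rpower at 2. rewrite ln_Rinv, Ropp_mult_distr_r_reverse, exp_Ropp by lra. reflexivity.
Qed.

Lemma power_derivative (A L v : R) : 0 < v ->
  derivable_pt_lim (fun w => A * Rpower w L) v (L * (A * Rpower v L) / v).
Proof.
  intros Hv.
  replace (L * (A * Rpower v L) / v) with (A * (L * Rpower v (L - 1))).
  - apply (derivable_pt_lim_scal (fun w => Rpower w L)). apply derivable_pt_lim_power. exact Hv.
  - unfold Rminus. rewrite Rpower_plus, Rpower_Ropp, Rpower_1 by exact Hv. field. lra.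
Qed.

Lemma power_continuous (A L v : R) : 0 < v -> continuity_pt (fun w => A * Rpower w L) v.
Proof.
  intros Hv. apply derivable_continuous_pt. exists (L * (A * Rpower v L) / v).
  apply power_derivative. exact Hv.
Qed.

(** [integral_upper_bound y K k a b] says [y <= K + int_a^b k] in the sense of gauge
    Riemann sums, without assuming that [k] is integrable. *)
Definition integral_upper_bound (y K : R) (k : R -> R) (a b : R) : Prop :=
  forall eta, eta > 0 -> exists delta : R -> R, (forall s, delta s > 0) /\
    forall n p xi, tagged_partition a b n p xi -> fine delta n p xi ->
      y <= K + real_riemann_sum k n p xi + eta.

Lemma integral_upper_bound_point (y K : R) (k : R -> R) (a : R) :
  integral_upper_bound y K k a a -> y <= K.
Proof.
  intros Hy. apply le_epsilon. intros eta Heta.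
  destruct (Hy eta Heta) as [delta [_ Hsum]].
  assert (Hpt := Hsum O (fun _ => a) (fun _ => a)).
  unfold real_riemann_sum in Hpt. simpl in Hpt. rewrite Rplus_0_r in Hpt. apply Hpt.
  - split; [reflexivity|split; [reflexivity|intros; lia]].
  - intros i Hi. lia.
Qed.

Lemma gronwall_comparison (tau s K L A e : R) (h g : R -> R) :
  0 < tau <= s -> L >= 0 -> e > 0 ->
  integral_upper_bound (g s) K (fun u => L * h u / u) tau s ->
  (forall u, tau <= u <= s -> h u <= A * Rpower u L) ->
  g s <= K + (A * Rpower s L - A * Rpower tau L) + e.
Proof.
  intros Hs HL He Hint Hh.
  destruct (Hint (e / 2) ltac:(lra)) as [delta1 [Hd1 Hsum]].
  destruct (gauge_fundamental_theorem (fun u => A * Rpower u L)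
              (fun u => L * (A * Rpower u L) / u) tau s ltac:(lra)
              (fun u Hu => power_derivative A L u ltac:(lra)) (e / 2) ltac:(lra))
    as [delta2 [Hd2 Hftc]].
  destruct (cousin tau s (fun u => Rmin (delta1 u) (delta2 u)) ltac:(lra)
              (fun u => Rmin_glb_lt _ _ _ (Hd1 u) (Hd2 u))) as [n [p [xi [Hpart Hfine]]]].
  assert (Hfine1 : fine delta1 n p xi /\ fine delta2 n p xi).
  { split; intros i Hi; destruct (Hfine i Hi);
      pose proof (Rmin_l (delta1 (xi i)) (delta2 (xi i)));
      pose proof (Rmin_r (delta1 (xi i)) (delta2 (xi i))); split; lra. }
  specialize (Hsum n p xi Hpart (proj1 Hfine1)).
  specialize (Hftc n p xi Hpart (proj2 Hfine1)).
  pose proof (Rle_abs (real_riemann_sum (fun u => L * (A * Rpower u L) / u) n p xi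
                       - (A * Rpower s L - A * Rpower tau L))) as Hdiff.
  assert (Hcmp : real_riemann_sum (fun u => L * h u / u) n p xi <=
                 real_riemann_sum (fun u => L * (A * Rpower u L) / u) n p xi).
  { apply (real_riemann_sum_le _ _ _ _ _ _ _ Hpart). intros u Hu.
    unfold Rdiv. apply Rmult_le_compat_r; [left; apply Rinv_0_lt_compat; lra|].
    apply Rmult_le_compat_l; [lra|]. apply Hh. exact Hu. }
  lra.
Qed.

Lemma gronwall_power (tau K L : R) (h g : R -> R) :
  tau > 0 -> L >= 0 ->
  (forall s, s >= tau -> continuity_pt h s) ->
  (forall s, s >= tau -> h s <= g s) ->
  (forall t, t >= tau -> integral_upper_bound (g t) K (fun s => L * h s / s) tau t) ->
  forall t, t >= tau -> g t <= K * Rpower (t / tau) L.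
Proof.
  intros Htau HL Hcont Hhg Hint t Ht.
  assert (HP : 0 < Rpower (t / tau) L) by apply Rpower_pos.
  apply le_epsilon. intros e He.
  set (eta := e / Rpower (t / tau) L).
  assert (Heta : eta > 0) by (apply Rdiv_lt_0_compat; lra).
  set (A := (K + eta) / Rpower tau L).
  assert (HA : forall u, 0 < u -> A * Rpower u L = (K + eta) * Rpower (u / tau) L).
  { intros u Hu. unfold A. rewrite Rpower_div by lra. field. apply Rgt_not_eq, Rpower_pos. }
  assert (Hbelow : forall s, tau <= s <= t -> h s - A * Rpower s L < 0).
  { apply continuous_induction; [lra| |..].
    - rewrite HA, Rdiv_diag, Rpower_base_1 by lra.
      pose proof (integral_upper_bound_point _ _ _ _ (Hint tau ltac:(lra))).
      pose proof (Hhg tau ltac:(lra)). lra.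
    - intros s Hs. apply continuity_pt_minus; [apply Hcont; lra|apply power_continuous; lra].
    - intros s Hs Hle.
      assert (Hgs := gronwall_comparison tau s K L A (eta / 2) h g ltac:(lra) HL ltac:(lra)
                       (Hint s ltac:(lra)) (fun u Hu => ltac:(pose proof (Hle u Hu); lra))).
      rewrite (HA tau), Rdiv_diag, Rpower_base_1 in Hgs by lra.
      pose proof (Hhg s ltac:(lra)). lra. }
  assert (Hgt := gronwall_comparison tau t K L A (eta / 2) h g ltac:(lra) HL ltac:(lra)
                   (Hint t Ht) (fun u Hu => ltac:(pose proof (Hbelow u Hu); lra))).
  rewrite (HA tau), Rdiv_diag, Rpower_base_1, HA in Hgt by lra.
  assert (eta * Rpower (t / tau) L = e) by (unfold eta; field; lra). nra.
Qed.

Section Perturbation.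
Variables (X : BanachSpace) (T U : R -> R -> X -> X) (nrm : R -> X -> R) (B : R -> X -> X).
Variables (C eps M a c : R).
Hypothesis nrm_norm : forall t, t >= 1 -> is_norm (nrm t).
Hypothesis C_pos : C > 0.
Hypothesis nrm_equiv : forall t x, t >= 1 ->
  bnorm x <= nrm t x /\ nrm t x <= C * Rpower t eps * bnorm x.
Hypothesis M_pos : M > 0.
Hypothesis T_growth : forall t s x, t >= s -> s >= 1 ->
  nrm t (T t s x) <= M * Rpower (t / s) a * nrm s x.
Hypothesis B_bound : forall t x, t >= 1 -> bnorm (B t x) <= c / Rpower t (1 + eps) * bnorm x.
Hypothesis U_continuous : forall tau x, tau >= 1 -> continuous_on_from tau (fun s => U s tau x).
Hypothesis U_variation_of_constants : forall t tau x, t >= tau -> tau >= 1 ->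
  is_integral (fun s => T t s (B s (U s tau x))) tau t (bsub (U t tau x) (T t tau x)).

(** The quantities of the Gronwall argument: [||U(t,tau)x||_t t^-a], and its continuous
    minorant [||U(s,tau)x|| s^-a] (frozen at [s = tau] to the left of [tau]). *)
Definition weighted_norm (tau : R) (x : X) (t : R) : R := nrm t (U t tau x) * Rpower t (-a).

Definition weighted_bnorm (tau : R) (x : X) (s : R) : R :=
  bnorm (U (Rmax s tau) tau x) * Rpower s (-a).

Lemma weighted_bnorm_le (tau : R) (x : X) (s : R) :
  tau >= 1 -> s >= tau -> weighted_bnorm tau x s <= weighted_norm tau x s.
Proof.
  intros Htau Hs. unfold weighted_bnorm, weighted_norm. rewrite Rmax_left by lra.
  apply Rmult_le_compat_r; [left; apply Rpower_pos|]. apply nrm_equiv. lra.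
Qed.

Lemma weighted_bnorm_continuous (tau : R) (x : X) (s : R) :
  tau >= 1 -> s >= tau -> continuity_pt (weighted_bnorm tau x) s.
Proof.
  intros Htau Hs. unfold weighted_bnorm.
  apply (continuity_pt_mult (fun v => bnorm (U (Rmax v tau) tau x)) (fun v => Rpower v (-a))).
  - apply continuity_pt_of_eps. intros e He.
    destruct (U_continuous tau x Htau s ltac:(lra) e He) as [d [Hd Hclose]].
    exists d. split; [exact Hd|]. intros u Hu. rewrite (Rmax_left s tau) by lra.
    eapply Rle_lt_trans; [apply (norm_reverse_triangle X _ (bnorm_is_norm X))|].
    apply Hclose; [apply Rmax_r|]. unfold Rmax. destruct (Rle_dec u tau); [|exact Hu].
    apply Rabs_def2 in Hu. apply Rabs_def1; lra.
  - apply derivable_continuous_pt. exists (-a * Rpower s (-a - 1)).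
    apply derivable_pt_lim_power. lra.
Qed.

Lemma free_term_bound (t tau : R) (x : X) :
  t >= tau -> tau >= 1 ->
  nrm t (T t tau x) * Rpower t (-a) <= M * Rpower tau (-a) * nrm tau x.
Proof.
  intros Ht Htau.
  assert (Hpow : Rpower (t / tau) a * Rpower t (-a) = Rpower tau (-a)).
  { rewrite Rpower_div, !Rpower_Ropp by lra. field.
    split; apply Rgt_not_eq, Rpower_pos. }
  pose proof (T_growth t tau x Ht Htau). pose proof (Rpower_pos t (-a)).
  replace (M * Rpower tau (-a) * nrm tau x)
    with (M * Rpower (t / tau) a * nrm tau x * Rpower t (-a)) by (rewrite <- Hpow; ring).
  apply Rmult_le_compat_r; lra.
Qed.

(** The integrand of the perturbation term, [T(t,s)B(s)y], in the weighted norm: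
    the decay of [B] exactly compensates the growth of [T] and of the norms. *)
Lemma kernel_bound (t s : R) (y : X) :
  1 <= s <= t ->
  nrm t (T t s (B s y)) * Rpower t (-a) <= c * C * M * (bnorm y * Rpower s (-a)) / s.
Proof.
  intros Hs.
  assert (Hgrowth : nrm t (T t s (B s y)) <=
            M * Rpower (t / s) a * (C * Rpower s eps * (c / Rpower s (1 + eps) * bnorm y))).
  { eapply Rle_trans; [apply T_growth; lra|].
    apply Rmult_le_compat_l; [left; apply Rmult_lt_0_compat; [lra|apply Rpower_pos]|].
    eapply Rle_trans; [apply nrm_equiv; lra|].
    apply Rmult_le_compat_l; [left; apply Rmult_lt_0_compat; [lra|apply Rpower_pos]|].
    apply B_bound. lra. }
  pose proof (Rpower_pos t (-a)).
  eapply Rle_trans; [apply Rmult_le_compat_r; [lra|exact Hgrowth]|]. right.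
  rewrite Rpower_div, Rpower_plus, Rpower_1, !Rpower_Ropp by lra.
  pose proof (Rpower_pos t a). pose proof (Rpower_pos s a). pose proof (Rpower_pos s eps).
  field. lra.
Qed.

Lemma weighted_integral_inequality (t tau : R) (x : X) :
  t >= tau -> tau >= 1 ->
  integral_upper_bound (weighted_norm tau x t) (M * Rpower tau (-a) * nrm tau x)
    (fun s => c * C * M * weighted_bnorm tau x s / s) tau t.
Proof.
  intros Ht Htau eta Heta.
  set (w := Rpower t (-a)). assert (Hw : w > 0) by apply Rpower_pos.
  set (W := C * Rpower t eps * w).
  assert (HW : W > 0) by (apply Rmult_lt_0_compat; [apply Rmult_lt_0_compat|]; auto using Rpower_pos).
  destruct (U_variation_of_constants t tau x Ht Htau (eta / W) ltac:(apply Rdiv_lt_0_compat; lra))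
    as [delta [Hdelta Happrox]].
  exists delta. split; [exact Hdelta|]. intros n p xi Hpart Hfine.
  specialize (Happrox n p xi Hpart Hfine).
  set (f := fun s => T t s (B s (U s tau x))) in *.
  set (v := bsub (U t tau x) (T t tau x)) in *.
  set (Rsum := riemann_sum f n p xi) in *.
  assert (Hnt : is_norm (nrm t)) by (apply nrm_norm; lra).
  assert (Herr : nrm t (bsub v Rsum) <= C * Rpower t eps * (eta / W)).
  { eapply Rle_trans; [apply nrm_equiv; lra|]. rewrite norm_sub_sym by apply bnorm_is_norm.
    apply Rmult_le_compat_l; [left; apply Rmult_lt_0_compat; auto using Rpower_pos|lra]. }
  assert (Hsplit : nrm t (U t tau x) <=
            nrm t (T t tau x) + real_riemann_sum (fun s => nrm t (f s)) n p xi
            + C * Rpower t eps * (eta / W)).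
  { pose proof (norm_sub_triangle X _ Hnt (U t tau x) (T t tau x)) as H1. fold v in H1.
    pose proof (norm_sub_triangle X _ Hnt v Rsum).
    pose proof (norm_riemann_sum_le X _ f _ _ _ _ _ Hnt Hpart) as H3. fold Rsum in H3. lra. }
  assert (Hkernel : w * real_riemann_sum (fun s => nrm t (f s)) n p xi <=
            real_riemann_sum (fun s => c * C * M * weighted_bnorm tau x s / s) n p xi).
  { rewrite real_riemann_sum_scal. apply (real_riemann_sum_le _ _ _ _ _ _ _ Hpart).
    intros s Hs. unfold f, weighted_bnorm, w. rewrite Rmax_left by lra.
    rewrite Rmult_comm. apply kernel_bound. lra. }
  pose proof (free_term_bound t tau x Ht Htau) as Hfree. fold w in Hfree.
  assert (C * Rpower t eps * (eta / W) * w = eta).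
  { replace (C * Rpower t eps * (eta / W) * w) with (eta * (W / W)) by (unfold W, Rdiv; ring).
    rewrite Rdiv_diag by lra. ring. }
  unfold weighted_norm. fold w.
  apply Rle_trans with ((nrm t (T t tau x) + real_riemann_sum (fun s => nrm t (f s)) n p xi
                         + C * Rpower t eps * (eta / W)) * w); [apply Rmult_le_compat_r; lra|].
  lra.
Qed.

End Perturbation.

Theorem mainTheorem15 (X : BanachSpace) (T U : R -> R -> X -> X) (nrm : R -> X -> R)
  (B : R -> X -> X) (C eps M a c : R) :
  evolution_family T ->
  (forall t, t >= 1 -> is_norm (nrm t)) ->
  C > 0 -> eps >= 0 ->
  (forall t x, t >= 1 -> bnorm x <= nrm t x /\ nrm t x <= C * Rpower t eps * bnorm x) ->
  M > 0 -> a > 0 ->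
  (forall t s x, t >= s -> s >= 1 -> nrm t (T t s x) <= M * Rpower (t / s) a * nrm s x) ->
  (forall t, t >= 1 -> bounded_linear (B t)) ->
  (forall x, continuous_on_from 1 (fun t => B t x)) ->
  (forall t x, t >= 1 -> bnorm (B t x) <= c / Rpower t (1 + eps) * bnorm x) ->
  evolution_family U ->
  (forall t tau x, t >= tau -> tau >= 1 ->
     is_integral (fun s => T t s (B s (U s tau x))) tau t (bsub (U t tau x) (T t tau x))) ->
  forall t tau x, t >= tau -> tau >= 1 ->
    nrm t (U t tau x) <= M * Rpower (t / tau) (a + c * C * M) * nrm tau x.
Proof.
  intros _ Hnorm HC _ Hequiv HM _ HT _ _ HB (_ & _ & _ & HUc) HVC t tau x Ht Htau.
  destruct (Rlt_or_le c 0) as [Hc|Hc].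
  - (* a bound [||B(1)|| <= c < 0] forces the space to be trivial *)
    assert (Hzero : forall y : X, y = bzero).
    { apply (negative_bound_trivial_space X (B 1) c Hc). intros y.
      pose proof (HB 1 y ltac:(lra)) as HB1. rewrite Rpower_base_1, Rdiv_1_r in HB1. exact HB1. }
    rewrite (Hzero (U t tau x)), (Hzero x), !norm_zero by (apply Hnorm; lra). lra.
  - assert (Hgronwall : weighted_norm X U nrm a tau x t <=
                         M * Rpower tau (-a) * nrm tau x * Rpower (t / tau) (c * C * M)).
    { apply (gronwall_power tau _ _ (weighted_bnorm X U a tau x)); [lra| | | | |exact Ht].
      - apply Rle_ge, Rmult_le_pos; [apply Rmult_le_pos|]; lra.
      - intros s Hs. eapply weighted_bnorm_continuous; eauto.
      - intros s Hs. eapply weighted_bnorm_le; eauto.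
      - intros t' Ht'. eapply weighted_integral_inequality; eauto. }
    unfold weighted_norm in Hgronwall.
    assert (Hunweight : Rpower t (-a) * Rpower t a = 1)
      by (rewrite Rpower_Ropp; apply Rinv_l, Rgt_not_eq, Rpower_pos).
    replace (M * Rpower (t / tau) (a + c * C * M) * nrm tau x)
      with (M * Rpower tau (-a) * nrm tau x * Rpower (t / tau) (c * C * M) * Rpower t a)
      by (rewrite Rpower_plus, (Rpower_div t tau a), Rpower_Ropp by lra; field;
          apply Rgt_not_eq, Rpower_pos).
    replace (nrm t (U t tau x)) with (nrm t (U t tau x) * Rpower t (-a) * Rpower t a)
      by (rewrite Rmult_assoc, Hunweight; ring).
    apply Rmult_le_compat_r; [left; apply Rpower_pos|exact Hgronwall].
Qed.
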